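(* Let $d,k,S\ge1$ be integers and $N\ge (S+1)^d k$. Let $f(\mathbf{x}_1,\dots,\mathbf{x}_N)$, $\mathbf{x}_i\in\mathbb{R}^d$, be a real polynomial in the $dN$ coordinates such that for each $j\in\{1,\dots,N\}$ the degree of $f$ in $\mathbf{x}_j$ is at most $S$, and such that $f=0$ on $\triangle_k$. Then $f\equiv0$.
   Context: The degree of $f$ in $\mathbf{x}_j$ means the total degree of $f$ as a polynomial in the $d$ coordinates of $\mathbf{x}_j$ (coefficients being polynomials in the other variables). $\triangle_k=\{(\mathbf{x}_1,\dots,\mathbf{x}_N)\in(\mathbb{R}^d)^N:\mathbf{x}_{j_1}=\dots=\mathbf{x}_{j_k}\text{ for some distinct indices }j_1,\dots,j_k\}$ (for $k=1$ this is all of $(\mathbb{R}^d)^N$). *)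

From HB Require Import structures.
From mathcomp Require Import all_boot all_order all_algebra.
Set Implicit Arguments. Unset Strict Implicit. Unset Printing Implicit Defensive.
Import Order.TTheory GRing.Theory Num.Theory.
Local Open Scope ring_scope.

(* A polynomial in the d*N coordinates x_{j,i} (j < N, i < d) all of whose
   individual exponents are at most S is encoded by its coefficient function
   on exponent arrays  e : 'I_N -> 'I_d -> 'I_S.+1. *)
Definition expo (N d S : nat) := {ffun 'I_N -> {ffun 'I_d -> 'I_S.+1}}.

Definition monom (R : ringType) (N d S : nat) (e : expo N d S)
  (x : 'I_N -> 'rV[R]_d) : R :=
  \prod_(j < N) \prod_(i < d) (x j 0 i) ^+ (e j i).

Definition peval (R : ringType) (N d S : nat) (c : expo N d S -> R)
  (x : 'I_N -> 'rV[R]_d) : R :=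
  \sum_(e : expo N d S) c e * monom e x.

Definition block_deg_le (R : ringType) (N d S : nat) (c : expo N d S -> R) : Prop :=
  forall e : expo N d S, c e != 0 ->
    forall j : 'I_N, (\sum_(i < d) (e j i : nat) <= S)%N.

Definition fat_diag (R : ringType) (N d k : nat) (x : 'I_N -> 'rV[R]_d) : Prop :=
  exists J : {set 'I_N}, #|J| = k /\ forall a b, a \in J -> b \in J -> x a = x b.

From mathcomp Require Import all_boot all_order all_algebra.
Set Implicit Arguments. Unset Strict Implicit. Unset Printing Implicit Defensive.
Import Order.TTheory GRing.Theory Num.Theory.
Local Open Scope ring_scope.

(* Since every individual exponent is at most S, the polynomial is determined
   by its values on the grid {0,...,S}^(dN): inverting the Vandermonde matrix of
   0,...,S in each of the dN coordinates expresses every coefficient as a linear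
   combination of grid values.  But N >= (S+1)^d k grid points x_1,...,x_N in
   {0,...,S}^d always contain k equal ones, so every grid point lies on the fat
   diagonal and all grid values vanish. *)

Lemma exists_nat_interpolation_weights (R : numFieldType) (S : nat) :
  exists W : 'M[R]_(S.+1), forall a b : 'I_S.+1,
    \sum_(p < S.+1) W p a * (p : nat)%:R ^+ b = (a == b)%:R.
Proof.
pose V := Vandermonde S.+1 (\row_(p < S.+1) (p : nat)%:R : 'rV[R]_S.+1).
have V_unit : V \in unitmx.
  rewrite unitmxE det_Vandermonde unitfE; apply/prodf_neq0 => i _.
  apply/prodf_neq0 => j lt_ij; rewrite !mxE -natrB ?pnatr_eq0 -?lt0n ?subn_gt0 //.
  exact: ltnW.
exists (invmx V) => a b.
have := congr1 (fun M : 'M[R]_S.+1 => M b a) (mulmxV V_unit).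
by rewrite !mxE eq_sym => <-; apply: eq_bigr => p _; rewrite !mxE mulrC.
Qed.

Lemma exists_subset_card (T : finType) (A : {set T}) n :
  (n <= #|A|)%N -> exists2 B : {set T}, B \subset A & #|B| = n.
Proof.
case/card_geqP=> s [uniq_s size_s sA]; exists [set x in s].
  by apply/subsetP=> x; rewrite inE => /sA.
by rewrite cardsE (card_uniqP uniq_s).
Qed.

Lemma fiber_pigeonhole (T U : finType) (f : T -> U) n :
  (#|U| * n < #|T|)%N -> exists u, (n < #|[set x | f x == u]|)%N.
Proof.
move=> lt_Un_T; apply/existsP; apply: contraTT lt_Un_T.
rewrite negb_exists -leqNgt => /forallP small_fibers.
have -> : #|T| = (\sum_(u : U) #|[set x | f x == u]|)%N.
  rewrite -sum1_card (partition_big f xpredT) //=.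
  by apply: eq_bigr => u _; rewrite sum1_card cardsE.
by rewrite -sum_nat_const; apply: leq_sum => u _; rewrite leqNgt.
Qed.

Section GridInterpolation.

Variables (R : numFieldType) (N d S : nat).

Definition grid_point (g : expo N d S) : 'I_N -> 'rV[R]_d :=
  fun j => \row_i (g j i : nat)%:R.

Lemma grid_point_fat_diag k (g : expo N d S) :
  (1 <= k)%N -> (S.+1 ^ d * k <= N)%N -> fat_diag k (grid_point g).
Proof.
case: k => // k _ le_grid_N.
have [v v_fiber] : exists v, (k < #|[set j | g j == v]|)%N.
  apply: fiber_pigeonhole; rewrite card_ffun !card_ord.
  by apply: leq_trans le_grid_N; rewrite ltn_pmul2l ?expn_gt0.
have [J sJ cardJ] := exists_subset_card v_fiber.
exists J; split=> // a b /(subsetP sJ) + /(subsetP sJ).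
by rewrite !inE /grid_point => /eqP-> /eqP->.
Qed.

Variable W : 'M[R]_(S.+1).
Hypothesis W_dual : forall a b : 'I_S.+1,
  \sum_(p < S.+1) W p a * (p : nat)%:R ^+ b = (a == b)%:R.

Definition grid_weight (a g : expo N d S) : R :=
  \prod_(j < N) \prod_(i < d) W (g j i) (a j i).

Lemma sum_grid_weight_monom (a e : expo N d S) :
  \sum_g grid_weight a g * monom e (grid_point g) = (a == e)%:R.
Proof.
transitivity (\prod_(j < N) \prod_(i < d) ((a j i == e j i)%:R : R)).
  pose F j i (p : 'I_S.+1) := W p (a j i) * (p : nat)%:R ^+ e j i.
  transitivity (\sum_(g : expo N d S) \prod_(j < N) \prod_(i < d) F j i (g j i)).
    apply: eq_bigr => g _; rewrite /grid_weight /monom -big_split /=.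
    by apply: eq_bigr => j _; rewrite -big_split /=; apply: eq_bigr => i _; rewrite mxE.
  rewrite -(bigA_distr_bigA (fun j (h : {ffun 'I_d -> 'I_S.+1}) =>
    \prod_(i < d) F j i (h i))) /=.
  apply: eq_bigr => j _; rewrite -(bigA_distr_bigA (F j)) /=.
  by apply: eq_bigr => i _; apply: W_dual.
have [<-|neq_ae] := eqVneq a e.
  by rewrite big1 // => j _; rewrite big1 // => i _; rewrite eqxx.
have /existsP[j /existsP[i neq_ji]] : [exists j, [exists i, a j i != e j i]].
  apply: contraR neq_ae => /existsPn same; apply/eqP/ffunP => j; apply/ffunP => i.
  by apply/eqP; move: (same j) => /existsPn/(_ i)/negPn.
by rewrite (bigD1 j) //= (bigD1 i) //= (negbTE neq_ji) !mul0r.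
Qed.

Lemma coef_grid_interpolation (c : expo N d S -> R) (a : expo N d S) :
  c a = \sum_g grid_weight a g * peval c (grid_point g).
Proof.
rewrite /peval; under eq_bigr => g _ do rewrite mulr_sumr.
rewrite exchange_big /= (eq_bigr (fun e => c e * (a == e)%:R)) => [|e _]; last first.
  by rewrite -sum_grid_weight_monom mulr_sumr; apply: eq_bigr => g _; rewrite mulrCA.
by rewrite (bigD1 a) //= eqxx mulr1 big1 ?addr0 // => e /negbTE; rewrite eq_sym => ->; rewrite mulr0.
Qed.

End GridInterpolation.

Theorem mainTheorem7 (R : realFieldType) (d k S N : nat)
  (hd : (1 <= d)%N) (hk : (1 <= k)%N) (hS : (1 <= S)%N)
  (hN : ((S.+1) ^ d * k <= N)%N)
  (c : expo N d S -> R)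
  (hdeg : block_deg_le c)
  (hvan : forall x : 'I_N -> 'rV[R]_d, fat_diag k x -> peval c x = 0) :
  forall e : expo N d S, c e = 0.
Proof.
have [W W_dual] := exists_nat_interpolation_weights R S.
move=> a; rewrite (coef_grid_interpolation W_dual c a) big1 // => g _.
by rewrite hvan ?mulr0 //; apply: grid_point_fat_diag.
Qed.
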